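(* Let $d\ge2$ and $\mathcal{X}\in\mathbb{R}^{n_1\times\cdots\times n_d}$. Writing $\inf$ for the infimum over all $k\in\mathbb{N}$ and all vectors $x_i^{(j)}\in\mathbb{R}^{n_j}$ ($i\in[k],j\in[d]$) with $\mathcal{X}=\sum_{i=1}^k x_i^{(1)}\circ\cdots\circ x_i^{(d)}$, we have (1) $\|\mathcal{X}\|_*=\inf \frac1d\sum_{i=1}^k\sum_{j=1}^d\|x_i^{(j)}\|^d$; (2) $\|\mathcal{X}\|_{S_{2/d}}^{2/d}=\inf \frac1d\sum_{i=1}^k\sum_{j=1}^d\|x_i^{(j)}\|^2$; (3) $\|\mathcal{X}\|_{S_{1/d}}^{1/d}=\inf \frac1d\sum_{i=1}^k\sum_{j=1}^d\|x_i^{(j)}\|$.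
   Context: $\circ$ denotes the outer product of vectors and $\|\cdot\|$ the Euclidean norm. For a tensor $\mathcal{X}\in\mathbb{R}^{n_1\times\cdots\times n_d}$ and $0<p\le1$, the tensor Schatten-$p$ (quasi-)norm is $$\|\mathcal{X}\|_{S_p}=\inf\Big\{\Big(\sum_{i=1}^r|s_i|^p\Big)^{1/p}: r\in\mathbb{N},\ s_i\in\mathbb{R},\ \mathcal{X}=\sum_{i=1}^r s_i\,u_i^{(1)}\circ\cdots\circ u_i^{(d)},\ u_i^{(j)}\in\mathbb{R}^{n_j},\ \|u_i^{(j)}\|=1\Big\}.$$ For $p=1$ this is the tensor nuclear norm $\|\mathcal{X}\|_*$. *)

From HB Require Import structures.
From mathcomp Require Import all_boot all_order all_algebra.
From mathcomp Require Import all_classical all_reals all_analysis.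
Set Implicit Arguments. Unset Strict Implicit. Unset Printing Implicit Defensive.
Import Order.TTheory GRing.Theory Num.Theory.
Local Open Scope ring_scope.
Local Open Scope classical_set_scope.

Definition mindex (d : nat) (n : 'I_d -> nat) := forall j : 'I_d, 'I_(n j).

Definition tensor (R : realType) (d : nat) (n : 'I_d -> nat) := mindex n -> R.

Definition vnorm (R : realType) (m : nat) (v : 'rV[R]_m) : R :=
  Num.sqrt (\sum_(k < m) v 0 k ^+ 2).

Definition outer (R : realType) (d : nat) (n : 'I_d -> nat)
  (u : forall j : 'I_d, 'rV[R]_(n j)) : tensor R n :=
  fun idx => \prod_(j < d) u j 0 (idx j).

Definition is_sdecomp (R : realType) (d : nat) (n : 'I_d -> nat)
  (X : tensor R n) (r : nat) (s : 'I_r -> R)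
  (u : 'I_r -> forall j : 'I_d, 'rV[R]_(n j)) : Prop :=
  forall idx, X idx = \sum_(i < r) s i * outer (u i) idx.

Definition is_decomp (R : realType) (d : nat) (n : 'I_d -> nat)
  (X : tensor R n) (k : nat)
  (x : 'I_k -> forall j : 'I_d, 'rV[R]_(n j)) : Prop :=
  forall idx, X idx = \sum_(i < k) outer (x i) idx.

Definition schatten (R : realType) (d : nat) (n : 'I_d -> nat)
  (p : R) (X : tensor R n) : R :=
  inf [set t : R | exists (r : nat) (s : 'I_r -> R)
                          (u : 'I_r -> forall j : 'I_d, 'rV[R]_(n j)),
         (forall i j, vnorm (u i j) = 1) /\ is_sdecomp X s u /\
         t = (\sum_(i < r) `|s i| `^ p) `^ p^-1].

Definition nuclear (R : realType) (d : nat) (n : 'I_d -> nat)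
  (X : tensor R n) : R := schatten 1 X.

Definition decomp_inf (R : realType) (d : nat) (n : 'I_d -> nat)
  (f : R -> R) (X : tensor R n) : R :=
  inf [set t : R | exists (k : nat)
                          (x : 'I_k -> forall j : 'I_d, 'rV[R]_(n j)),
         is_decomp X x /\
         t = d%:R^-1 * \sum_(i < k) \sum_(j < d) f (vnorm (x i j))].

From HB Require Import structures.
From mathcomp Require Import all_boot all_order all_algebra.
From mathcomp Require Import all_classical all_reals all_analysis.
Set Implicit Arguments. Unset Strict Implicit. Unset Printing Implicit Defensive.
Import Order.TTheory GRing.Theory Num.Theory.
Local Open Scope ring_scope.
Local Open Scope classical_set_scope.

(* Write D = d + 1 (so d >= 1) for the order of the tensor.
   All three identities are instances of one statement: for every positive
   integer q and p = q / D,
       schatten p X `^ p = inf (1/D) sum_i sum_j ||x_i^(j)||^q ,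
   (q = D gives the nuclear norm, q = 2 and q = 1 the other two items).
   Both infima range over sets of nonnegative reals, and the general lemma
   [inf_powR_eq] reduces the identity to comparing the two sets elementwise:
   - a decomposition X = sum_i x_i^(1) o ... o x_i^(D) is renormalised into
     unit vectors with weights s_i = prod_j ||x_i^(j)|| ([normalize_factors]);
     by AM-GM ([amgm_powR]) s_i^p is at most (1/D) sum_j ||x_i^(j)||^q;
   - conversely a weighted decomposition sum_i s_i u_i^(1) o ... o u_i^(D)
     with unit vectors is rebalanced so that every factor has norm
     |s_i|^(1/D) ([balance_factors]), which makes the two costs equal.
   Tensors with an empty mode (some n_j = 0) have no entries at all and are
   handled by the empty decomposition ([sdecomp_of_empty_mode]). *)

Section Infimum.
Variable R : realType.

(* Infima of sets of nonnegative reals are nonnegative (inf set0 = 0). *)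
Lemma inf_ge0 {A : set R} : (forall a, A a -> 0 <= a) -> 0 <= inf A.
Proof.
move=> A_ge0; have [neA|eA] := pselect (A !=set0); first exact: lb_le_inf.
suff -> : A = set0 by rewrite inf0.
by apply/seteqP; split => // a Aa; apply: eA; exists a.
Qed.

Lemma inf_le {A : set R} {a : R} : (forall b, A b -> 0 <= b) -> A a ->
  inf A <= a.
Proof. by move=> A_ge0 Aa; apply: ge_inf => //; exists 0 => b /A_ge0. Qed.

Lemma powRVK {a p : R} : p != 0 -> 0 <= a -> (a `^ p^-1) `^ p = a.
Proof. by move=> p_neq0 a_ge0; rewrite -powRrM mulVf // powRr1. Qed.

Lemma inf_powR_eq (A B : set R) (p : R) : 0 < p ->
  (forall a, A a -> 0 <= a) -> (forall b, B b -> 0 <= b) ->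
  (forall b, B b -> exists2 a, A a & a `^ p <= b) ->
  (forall a, A a -> B (a `^ p)) ->
  inf A `^ p = inf B.
Proof.
move=> p_gt0 A_ge0 B_ge0 BA AB; have p_neq0 : p != 0 by rewrite gt_eqF.
have [neA|eA] := pselect (A !=set0); last first.
  have eB : B = set0.
    by apply/seteqP; split => // b /BA [a Aa _]; apply: eA; exists a.
  have -> : A = set0 by apply/seteqP; split => // a Aa; apply: eA; exists a.
  by rewrite eB inf0 powR0.
have neB : B !=set0 by case: neA => a /AB Ba; exists (a `^ p).
have infA_ge0 := inf_ge0 A_ge0; have infB_ge0 := inf_ge0 B_ge0.
apply/le_anti/andP; split.
  apply: lb_le_inf => // b /BA [a Aa le_ab]; apply: le_trans le_ab.
  apply: ge0_ler_powR; rewrite ?nnegrE ?(ltW p_gt0) //.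
  - exact: A_ge0.
  - exact: inf_le.
have le_infBA : inf B `^ p^-1 <= inf A.
  apply: lb_le_inf => // a Aa; apply: (@le_trans _ _ ((a `^ p) `^ p^-1)).
    by apply: ge0_ler_powR; rewrite ?nnegrE ?invr_ge0 ?(ltW p_gt0) ?powR_ge0
      ?(inf_le B_ge0 (AB a Aa)).
  by rewrite -powRrM divff // powRr1 // A_ge0.
rewrite -[leLHS](powRVK p_neq0 infB_ge0).
by apply: ge0_ler_powR; rewrite ?nnegrE ?(ltW p_gt0) ?powR_ge0.
Qed.

End Infimum.

Section EuclideanNorm.
Variables (R : realType) (m : nat).

Lemma vnorm_ge0 (v : 'rV[R]_m) : 0 <= vnorm v.
Proof. exact: sqrtr_ge0. Qed.

Lemma vnormZ (a : R) (v : 'rV[R]_m) : vnorm (a *: v) = `|a| * vnorm v.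
Proof.
rewrite /vnorm; under eq_bigr do rewrite mxE exprMn.
by rewrite -mulr_sumr sqrtrM ?sqr_ge0 // sqrtr_sqr.
Qed.

Lemma vnorm_eq0 (v : 'rV[R]_m) : vnorm v = 0 -> v = 0.
Proof.
move=> /eqP; rewrite /vnorm sqrtr_eq0 => sum_le0.
have sum_eq0 : \sum_(k < m) v 0 k ^+ 2 = 0.
  by apply/le_anti; rewrite sum_le0 sumr_ge0 // => k _; apply: sqr_ge0.
have sq_eq0 := psumr_eq0P (fun k _ => sqr_ge0 (v 0 k)) sum_eq0.
by apply/matrixP => i j; rewrite (ord1 i) mxE; apply/eqP; rewrite -sqrf_eq0 sq_eq0.
Qed.

Lemma unit_vector : (0 < m)%N -> {e : 'rV[R]_m | vnorm e = 1}.
Proof.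
move=> m_gt0; exists (\row_k (k == Ordinal m_gt0)%:R).
rewrite /vnorm (bigD1 (Ordinal m_gt0)) //= big1 ?mxE ?eqxx ?expr1n ?addr0 ?sqrtr1 //.
by move=> k /negbTE k_neq; rewrite mxE k_neq expr0n.
Qed.

End EuclideanNorm.

(* AM-GM, raised to the q-th power: for nonnegative a_1 .. a_D,
   (prod_j a_j) ^ (q / D) <= (1/D) sum_j a_j ^ q. *)
Lemma amgm_powR (R : realType) (d q : nat) (a : 'I_d.+1 -> R) :
  (forall j, 0 <= a j) ->
  (\prod_j a j) `^ (q%:R / d.+1%:R) <= d.+1%:R^-1 * \sum_j a j ^+ q.
Proof.
move=> a_ge0.
have aq_ge0 : {in predT, forall j, 0 <= a j ^+ q} by move=> j _; apply: exprn_ge0.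
have amgm := (leif_AGM aq_ge0).1; rewrite cardT size_enum_ord in amgm.
set M := _ / _ in amgm.
have {amgm} prod_le : \prod_j a j ^+ q <= M ^+ d.+1 := amgm.
have M_ge0 : 0 <= M by rewrite divr_ge0 // sumr_ge0 // => j _; apply: exprn_ge0.
rewrite powRrM powR_mulrn ?prodr_ge0 // -prodrXl.
apply: (@le_trans _ _ ((M ^+ d.+1) `^ d.+1%:R^-1)).
  by apply: ge0_ler_powR; rewrite ?nnegrE ?invr_ge0 ?prodr_ge0 ?exprn_ge0.
by rewrite -powR_mulrn // -powRrM divff ?powRr1 // /M mulrC.
Qed.

Section Decompositions.
Variables (R : realType) (d : nat) (n : 'I_d.+1 -> nat) (X : tensor R n).

(* A tensor with an empty mode has no entries: the empty weighted
   decomposition represents it. *)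
Lemma sdecomp_of_empty_mode (j0 : 'I_d.+1) : n j0 = 0%N ->
  is_sdecomp X (fun _ : 'I_0 => 0) (fun _ _ => 0).
Proof. by move=> nj0 idx; have := ltn_ord (idx j0); rewrite [in X in (_ < X)%N]nj0. Qed.

(* Every decomposition can be renormalised into unit vectors with weights
   s_i = prod_j ||x_i^(j)|| (zero factors are replaced by a fixed unit vector,
   their weight being 0). *)
Lemma normalize_factors (k : nat) (x : 'I_k -> forall j, 'rV[R]_(n j)) :
  (forall j, (0 < n j)%N) -> is_decomp X x ->
  exists u : 'I_k -> forall j, 'rV[R]_(n j),
    (forall i j, vnorm (u i j) = 1) /\
    is_sdecomp X (fun i => \prod_j vnorm (x i j)) u.
Proof.
move=> n_gt0 decX; pose e j := sval (@unit_vector R _ (n_gt0 j)).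
pose u i j := if vnorm (x i j) == 0 then e j else (vnorm (x i j))^-1 *: x i j.
have scale_u i j : vnorm (x i j) *: u i j = x i j.
  rewrite /u; case: eqP => [/[dup] /vnorm_eq0 -> ->|/eqP nx_neq0].
    by rewrite scale0r.
  by rewrite scalerA divff ?scale1r.
exists u; split.
  move=> i j; rewrite /u; case: eqP => [_|/eqP nx_neq0].
    exact: svalP (@unit_vector R _ (n_gt0 j)).
  by rewrite vnormZ ger0_norm ?invr_ge0 ?vnorm_ge0 // mulVf.
move=> idx; rewrite decX; apply: eq_bigr => i _.
rewrite /outer -big_split /=; apply: eq_bigr => j _.
by rewrite -[in LHS](scale_u i j) mxE.
Qed.

(* Conversely a weighted decomposition with unit vectors is rebalanced into a
   plain decomposition whose factors all have norm |s_i| ^ (1/D): the sign of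
   s_i is put on the first factor. *)
Lemma balance_factors (r : nat) (s : 'I_r -> R)
    (u : 'I_r -> forall j, 'rV[R]_(n j)) :
  (forall i j, vnorm (u i j) = 1) -> is_sdecomp X s u ->
  exists x : 'I_r -> forall j, 'rV[R]_(n j),
    is_decomp X x /\ forall i j, vnorm (x i j) = `|s i| `^ d.+1%:R^-1.
Proof.
move=> u_unit decX; pose c i := `|s i| `^ d.+1%:R^-1.
pose lam i (j : 'I_d.+1) := if j == ord0 then Num.sg (s i) * c i else c i.
have c_pow i : c i ^+ d.+1 = `|s i|.
  by rewrite -powR_mulrn ?powR_ge0 // powRVK ?pnatr_eq0.
exists (fun i j => lam i j *: u i j); split.
  move=> idx; rewrite decX; apply: eq_bigr => i _.
  rewrite /outer; under [in RHS]eq_bigr do rewrite mxE.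
  rewrite big_split /=; congr (_ * _).
  (* lift ord0 j == ord0 computes to false: only the first factor is signed *)
  rewrite big_ord_recl /lam eqxx (eq_bigr (fun _ => c i)) //.
  by rewrite prodr_const card_ord -mulrA -exprS c_pow -numEsg.
move=> i j; rewrite vnormZ u_unit mulr1 /lam.
case: ifP => _; last by rewrite ger0_norm ?powR_ge0.
rewrite normrM normr_sg ger0_norm ?powR_ge0 //.
by case: eqP => [s0|_]; rewrite ?mul1r // /c s0 normr0 powR0 ?mul0r.
Qed.

Lemma schatten_powR_decomp_inf (q : nat) (f : R -> R) (p : R) : (0 < q)%N ->
  (forall t, 0 <= t -> f t = t ^+ q) -> p = q%:R / d.+1%:R ->
  schatten p X `^ p = decomp_inf f X.
Proof.
move=> q_gt0 f_pow p_def; have p_gt0 : 0 < p by rewrite p_def divr_gt0 ?ltr0n.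
have p_neq0 : p != 0 by rewrite gt_eqF.
have cost_ge0 k (x : 'I_k -> forall j, 'rV[R]_(n j)) :
    0 <= d.+1%:R^-1 * \sum_(i < k) \sum_(j < d.+1) f (vnorm (x i j)).
  rewrite mulr_ge0 ?invr_ge0 // !sumr_ge0 // => i _; rewrite sumr_ge0 // => j _.
  by rewrite f_pow ?vnorm_ge0 ?exprn_ge0 ?vnorm_ge0.
have value_ge0 r (s : 'I_r -> R) : 0 <= \sum_(i < r) `|s i| `^ p.
  by rewrite sumr_ge0 // => i _; apply: powR_ge0.
rewrite /schatten /decomp_inf; apply: inf_powR_eq => //.
- by move=> a [r [s [u [_ [_ ->]]]]]; apply: powR_ge0.
- by move=> b [k [x [_ ->]]]; apply: cost_ge0.
- move=> b [k [x [decX ->]]].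
  have [n_gt0|] := pselect (forall j, (0 < n j)%N); last first.
    move=> /existsNP [j0 /negP]; rewrite -eqn0Ngt => /eqP nj0.
    exists 0; last by rewrite powR0 ?cost_ge0.
    exists 0%N, (fun _ => 0), (fun _ _ => 0).
    split; first by case.
    by split; [exact: sdecomp_of_empty_mode nj0 | rewrite big_ord0 powR0 ?invr_eq0].
  have [u [u_unit decXu]] := normalize_factors n_gt0 decX.
  pose s i := \prod_j vnorm (x i j).
  exists ((\sum_(i < k) `|s i| `^ p) `^ p^-1); first by exists k, s, u.
  rewrite powRVK ?value_ge0 // mulr_sumr; apply: ler_sum => i _.
  rewrite ger0_norm; last by apply: prodr_ge0 => j _; apply: vnorm_ge0.
  under eq_bigr do rewrite f_pow ?vnorm_ge0 //.
  by rewrite p_def; apply: amgm_powR => j; apply: vnorm_ge0.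
- move=> a [r [s [u [u_unit [decX ->]]]]].
  have [x [decXx x_norm]] := balance_factors u_unit decX.
  exists r, x; split=> //; rewrite powRVK ?value_ge0 // mulr_sumr.
  apply: eq_bigr => i _; under eq_bigr do rewrite x_norm f_pow ?powR_ge0 //.
  rewrite sumr_const card_ord -[_ ^+ q *+ _]mulr_natl mulKf ?pnatr_eq0 //.
  rewrite -powR_mulrn; last exact: powR_ge0.
  by rewrite -powRrM p_def mulrC.
Qed.

End Decompositions.

Lemma schatten_ge0 (R : realType) (d : nat) (n : 'I_d -> nat) (X : tensor R n)
  (p : R) : 0 <= schatten p X.
Proof. by apply: inf_ge0 => a [r [s [u [_ [_ ->]]]]]; apply: powR_ge0. Qed.

Theorem corollary1 (R : realType) (d : nat) (n : 'I_d -> nat)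
  (X : tensor R n) (hd : (2 <= d)%N) :
  [/\ nuclear X = decomp_inf (fun t : R => t ^+ d) X,
      schatten (2 / d%:R) X `^ (2 / d%:R) = decomp_inf (fun t : R => t ^+ 2) X
    & schatten (1 / d%:R) X `^ (1 / d%:R) = decomp_inf (fun t : R => t) X].
Proof.
case: d n X hd => [//|d] n X _; split.
- rewrite /nuclear -[schatten 1 X]powRr1 ?schatten_ge0 //.
  by apply: (schatten_powR_decomp_inf X (q := d.+1)); rewrite ?divff ?pnatr_eq0.
- exact: (schatten_powR_decomp_inf X (q := 2)).
- exact: (schatten_powR_decomp_inf X (q := 1)).
Qed.
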